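(* Let $X$ be a set with at least two elements. Then $\mathcal{PI}^{\ast}_X$ and $\overline{\mathcal{PI}^{\ast}}_X$ are fundamental.
   Context: Let $X'=\{x':x\in X\}$ be a disjoint copy of $X$. Let $P_X$ be the set of all partitions of $X\cup X'$ each of whose blocks is either a singleton (a point) or a generalised line (a subset meeting both $X$ and $X'$). Product $\star$: with $X''$ a third copy of $X$, regard $\alpha$ as a partition of $X\cup X''$ and $\beta$ as a partition of $X''\cup X'$, let $\sim$ be the equivalence on $X\cup X''\cup X'$ generated by the blocks of both; $\alpha\star\beta$ is the partition of $X\cup X'$ in which distinct $u,v$ are in one block iff $u\sim v$ and the $\sim$-class of $u$ contains no singleton block of $\alpha$ or $\beta$. Product $\circ$: $\alpha\circ\beta$ has as generalised lines exactly the sets $A\cup D'$ with $A\cup B'$ a generalised line of $\alpha$ and $B\cup D'$ a generalised line of $\beta$ (same $B\subseteq X$), all other elements points. $\mathcal{PI}^{\ast}_X=(P_X,\star)$ and $\overline{\mathcal{PI}^{\ast}}_X=(P_X,\circ)$ are inverse semigroups. An inverse semigroup $S$ is fundamental if the relation $\mu=\{(a,b)\in S\times S: a^{-1}ea=b^{-1}eb \text{ for all idempotents } e\in S\}$ is the identity relation. *)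

From Stdlib Require Import Relations Relation_Operators.

Set Implicit Arguments.

(** Points of X ∪ X': [inl x] is x ∈ X, [inr x] is x' ∈ X'.
    A partition of X ∪ X' is represented by its equivalence relation
    ("u and v lie in the same block"). *)
Definition pt (X : Type) := (X + X)%type.
Definition prel (X : Type) := pt X -> pt X -> Prop.

Definition singleton_block (X : Type) (a : prel X) (u : pt X) : Prop :=
  forall v, a u v -> v = u.

Definition line_block (X : Type) (a : prel X) (u : pt X) : Prop :=
  (exists x, a u (inl x)) /\ (exists x, a u (inr x)).

Definition in_PX (X : Type) (a : prel X) : Prop :=
  equivalence (pt X) a /\
  forall u, singleton_block a u \/ line_block a u.

(** Three copies X, X'', X' used for the product ⋆ *)
Inductive pt3 (X : Type) : Type :=
| Lft : X -> pt3 X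
| Mid : X -> pt3 X
| Rgt : X -> pt3 X.

(** alpha viewed on X ∪ X'' , beta viewed on X'' ∪ X' *)
Definition emb_a (X : Type) (u : pt X) : pt3 X :=
  match u with inl x => Lft x | inr x => Mid x end.
Definition emb_b (X : Type) (u : pt X) : pt3 X :=
  match u with inl x => Mid x | inr x => Rgt x end.
Definition emb_out (X : Type) (u : pt X) : pt3 X :=
  match u with inl x => Lft x | inr x => Rgt x end.

Definition gen_rel (X : Type) (a b : prel X) : pt3 X -> pt3 X -> Prop :=
  fun p q =>
    (exists u v, a u v /\ p = emb_a u /\ q = emb_a v) \/
    (exists u v, b u v /\ p = emb_b u /\ q = emb_b v).

Definition sim (X : Type) (a b : prel X) : pt3 X -> pt3 X -> Prop :=
  clos_refl_sym_trans (pt3 X) (gen_rel a b).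

Definition class_has_point (X : Type) (a b : prel X) (p : pt3 X) : Prop :=
  exists w : pt X,
    (singleton_block a w /\ sim a b (emb_a w) p) \/
    (singleton_block b w /\ sim a b (emb_b w) p).

Definition star (X : Type) (a b : prel X) : prel X :=
  fun u v =>
    u = v \/
    (sim a b (emb_out u) (emb_out v) /\ ~ class_has_point a b (emb_out u)).

(** The product ∘ : the generalised lines of a∘b are the sets A ∪ D' where
    A ∪ B' is a generalised line of a and B ∪ D' a generalised line of b
    (same B).  Such a pair of lines is determined by any b0 ∈ B: the
    a-block of (b0)' and the b-block of b0, required to be lines with
    equal B-parts. *)
Definition circ (X : Type) (a b : prel X) : prel X :=
  fun u v =>
    u = v \/
    exists b0 : X,
      line_block a (inr b0) /\ line_block b (inl b0) /\
      (forall x, a (inr b0) (inr x) <-> b (inl b0) (inl x)) /\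
      let inAD := fun w : pt X =>
        match w with
        | inl x => a (inr b0) (inl x)
        | inr x => b (inl b0) (inr x)
        end in
      inAD u /\ inAD v.

(** Semigroup notions, for a semigroup (S, op) with carrier given by a
    predicate P on an ambient type T. *)
Definition idempotent_in (T : Type) (P : T -> Prop) (op : T -> T -> T) (e : T) :=
  P e /\ op e e = e.

Definition inverse_in (T : Type) (P : T -> Prop) (op : T -> T -> T) (a a' : T) :=
  P a' /\ op (op a a') a = a /\ op (op a' a) a' = a'.

Definition mu_rel (T : Type) (P : T -> Prop) (op : T -> T -> T) (a b : T) :=
  forall e, idempotent_in P op e ->
  forall a' b', inverse_in P op a a' -> inverse_in P op b b' ->
    op (op a' e) a = op (op b' e) b.

Definition fundamental (T : Type) (P : T -> Prop) (op : T -> T -> T) :=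
  forall a b, P a -> P b -> mu_rel P op a b -> a = b.

From Stdlib Require Import Relations Relation_Operators Classical FunctionalExtensionality PropExtensionality.

(* For both products the inverse of a is its transpose (exchange X and X'),
   and for A ⊆ X the partition e_A whose only line is A ∪ A' is idempotent.
   If x z' lies on a line of a with X-part A, then a⁻¹ e_A a joins z and z';
   conversely, if b⁻¹ e_A b joins z and z', then z' lies on a line of b whose
   X-part is contained in A.  Hence if a μ b, the lines of a and of b through
   any z' have the same X-part, which forces a = b.  The argument does not
   use the assumption that X has two elements. *)

Set Implicit Arguments.

Section PartitionSemigroups.

Variable X : Type.
Implicit Types (a b d : prel X) (u v : pt X) (p q : pt3 X) (A : X -> Prop).

Lemma PX_refl a : in_PX a -> forall u, a u u.
Proof. now intros [[Hrefl _ _] _]. Qed.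

Lemma PX_sym a : in_PX a -> forall u v, a u v -> a v u.
Proof. now intros [[_ _ Hsym] _]. Qed.

Lemma PX_trans a : in_PX a -> forall u v w, a u v -> a v w -> a u w.
Proof. now intros [[_ Htrans _] _]. Qed.

Local Ltac equiv_auto Ha :=
  let R := fresh "R" in let S := fresh "S" in let T := fresh "T" in
  pose proof (PX_refl Ha) as R; pose proof (PX_sym Ha) as S;
  pose proof (PX_trans Ha) as T; eauto 7.

Lemma prel_ext a b : (forall u v, a u v <-> b u v) -> a = b.
Proof.
  intro H. extensionality u; extensionality v.
  now apply propositional_extensionality.
Qed.

Lemma line_block_of_related a u v : in_PX a -> a u v -> u <> v -> line_block a u.
Proof.
  intros Ha Huv Hne. destruct (proj2 Ha u) as [Hsing|Hline]; [|exact Hline].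
  now destruct Hne; symmetry; apply Hsing.
Qed.

Definition swap_pt u : pt X := match u with inl x => inr x | inr x => inl x end.
Definition base_pt u : X := match u with inl x | inr x => x end.

Definition transpose a : prel X := fun u v => a (swap_pt u) (swap_pt v).

Lemma transpose_PX a : in_PX a -> in_PX (transpose a).
Proof.
  intro Ha. split; [split|].
  - intro u. apply (PX_refl Ha).
  - intros u v w. apply (PX_trans Ha).
  - intros u v. apply (PX_sym Ha).
  - intro u. destruct (proj2 Ha (swap_pt u)) as [Hsing|[[x Hx] [y Hy]]].
    + left. intros v Hv. specialize (Hsing _ Hv).
      destruct u, v; simpl in Hsing; congruence.
    + right. split; [exists y|exists x]; assumption.
Qed.

Lemma transpose_involutive a : transpose (transpose a) = a.
Proof. apply prel_ext. now intros [u|u] [v|v]. Qed.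

Definition single_line A : prel X :=
  fun u v => u = v \/ (A (base_pt u) /\ A (base_pt v)).

Lemma single_line_PX A : in_PX (single_line A).
Proof.
  split; [split|].
  - now left.
  - intros u v w [<-|[Hu Hv]] [<-|[Hv' Hw]]; unfold single_line; auto.
  - intros u v [<-|[Hu Hv]]; unfold single_line; auto.
  - intro u. destruct (classic (A (base_pt u))) as [HA|HA].
    + right. split; [exists (base_pt u)|exists (base_pt u)]; right; auto.
    + left. now intros v [<-|[Hu _]].
Qed.

(* [d] behaves like the idempotent a a⁻¹ as far as a left factor of [a] can see:
   it never joins points whose bases lie in different X-classes of [a], and it
   joins all points whose bases lie in the X-part of one line of [a]. *)
Definition left_unit_for d a : Prop :=
  (forall u v, d u v -> u = v \/ a (inl (base_pt u)) (inl (base_pt v))) /\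
  (forall x z u v, a (inl x) (inr z) ->
     a (inl x) (inl (base_pt u)) -> a (inl x) (inl (base_pt v)) -> d u v).

Lemma single_line_left_unit A : left_unit_for (single_line A) (single_line A).
Proof.
  split.
  - intros u v [<-|Huv]; [now left|right; now right].
  - intros x z u v [Hxz|[Hx Hz]] [Hu|[_ Hu]] [Hv|[_ Hv]]; try discriminate;
      right; simpl in *; split; congruence.
Qed.

Lemma sim_left a b u v : a u v -> sim a b (emb_a u) (emb_a v).
Proof. intro H. apply rst_step. left. now exists u, v. Qed.

Lemma sim_right a b u v : b u v -> sim a b (emb_b u) (emb_b v).
Proof. intro H. apply rst_step. right. now exists u, v. Qed.

Definition on_pt3 (P : pt X -> Prop) (Q : X -> Prop) p : Prop :=
  match p with Lft x => P (inl x) | Mid y => Q y | Rgt x => P (inr x) end.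

Definition sim_closed a b (S : pt3 X -> Prop) : Prop :=
  (forall u v, a u v -> (S (emb_a u) <-> S (emb_a v))) /\
  (forall u v, b u v -> (S (emb_b u) <-> S (emb_b v))).

Definition point_free a b (S : pt3 X -> Prop) : Prop :=
  (forall w, S (emb_a w) -> exists v, a w v /\ v <> w) /\
  (forall w, S (emb_b w) -> exists v, b w v /\ v <> w).

Lemma sim_closed_iff a b S p q : sim_closed a b S -> sim a b p q -> (S p <-> S q).
Proof.
  intros [Ha Hb] Hpq.
  induction Hpq as [p q [(u&v&H&->&->)|(u&v&H&->&->)]| | |]; firstorder.
Qed.

Lemma point_free_no_point a b S p :
  sim_closed a b S -> point_free a b S -> S p -> ~ class_has_point a b p.
Proof.
  intros Hcl [Na Nb] Hp [w [[Hsing Hsim]|[Hsing Hsim]]];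
    apply (sim_closed_iff Hcl Hsim) in Hp.
  - destruct (Na w Hp) as [v [Hv Hne]]. exact (Hne (Hsing v Hv)).
  - destruct (Nb w Hp) as [v [Hv Hne]]. exact (Hne (Hsing v Hv)).
Qed.

Lemma star_closed_iff a b P Q u v :
  sim_closed a b (on_pt3 P Q) -> star a b u v -> (P u <-> P v).
Proof.
  intros Hcl [<-|[Hsim _]]; [tauto|].
  apply (sim_closed_iff Hcl) in Hsim. now destruct u, v.
Qed.

(* A sim-closed class containing no singleton block of either factor is a
   single block of the product once it is connected, e.g. through a hub [h]. *)
Lemma star_of_hub a b P Q h u v :
  sim_closed a b (on_pt3 P Q) -> point_free a b (on_pt3 P Q) ->
  (forall w, P w -> sim a b (emb_out w) h) -> P u -> P v -> star a b u v.
Proof.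
  intros Hcl Hpf Hhub Hu Hv. right. split.
  - apply rst_trans with h; [apply Hhub, Hu|apply rst_sym, Hhub, Hv].
  - apply (point_free_no_point Hcl Hpf). now destruct u.
Qed.

Lemma star_left_unit d a : in_PX a -> left_unit_for d a -> star d a = a.
Proof.
  intros Ha [Hcol Hline].
  assert (Hcl : forall u, sim_closed d a (on_pt3 (a u) (fun y => a u (inl y)))).
  { intro u; split; intros u1 v1 H.
    - destruct (Hcol _ _ H) as [<-|H']; [tauto|].
      destruct u1, v1; simpl in *; split; intro; equiv_auto Ha.
    - destruct u1, v1; simpl in *; split; intro; equiv_auto Ha. }
  apply prel_ext; intros u v; split.
  - intro H. apply (star_closed_iff (Hcl u) H), (PX_refl Ha).
  - intro H. destruct (classic (u = v)) as [<-|Hne]; [now left|].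
    destruct (line_block_of_related Ha H Hne) as [[x0 Hx0] [z0 Hz0]].
    assert (Hd : forall u1 v1, a u (inl (base_pt u1)) -> a u (inl (base_pt v1)) -> d u1 v1).
    { intros u1 v1 Hu1 Hv1. apply (Hline x0 z0); equiv_auto Ha. }
    apply (star_of_hub (h := Mid x0) _ _ (Hcl u)); [split| |apply (PX_refl Ha)|exact H].
    + intros [y|y] Hy; simpl in Hy; [exists (inr x0)|exists (inl y)];
        (split; [apply Hd; simpl; equiv_auto Ha|discriminate]).
    + intros [y|y] Hy; simpl in Hy; [exists (inr z0)|exists (inl x0)];
        (split; [equiv_auto Ha|discriminate]).
    + intros [y|y] Hy.
      * apply (sim_left d a (inl y) (inr x0)), Hd; simpl; equiv_auto Ha.
      * apply rst_sym, (sim_right d a (inl x0) (inr y)). equiv_auto Ha.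
Qed.

Lemma star_transpose_left_unit a : in_PX a -> left_unit_for (star a (transpose a)) a.
Proof.
  intro Ha.
  assert (Hcl : forall x, sim_closed a (transpose a)
      (on_pt3 (fun w => a (inl x) (inl (base_pt w))) (fun y => a (inl x) (inr y)))).
  { intro x; split; intros [u|u] [v|v] H; unfold transpose in H; simpl in *;
      split; intro; equiv_auto Ha. }
  split.
  - intros u v H. right. apply (star_closed_iff (Hcl (base_pt u)) H), (PX_refl Ha).
  - intros x z u v Hxz Hu Hv.
    apply (star_of_hub (h := Mid z) _ _ (Hcl x)); [split| |exact Hu|exact Hv].
    + intros [y|y] Hy; simpl in Hy; [exists (inr z)|exists (inl x)];
        (split; [equiv_auto Ha|discriminate]).
    + intros [y|y] Hy; simpl in Hy; [exists (inr x)|exists (inl z)];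
        (split; [unfold transpose; simpl; equiv_auto Ha|discriminate]).
    + intros [y|y] Hy; simpl in Hy.
      * apply (sim_left a (transpose a) (inl y) (inr z)). equiv_auto Ha.
      * apply (sim_right a (transpose a) (inr y) (inl z)).
        unfold transpose; simpl. equiv_auto Ha.
Qed.

Lemma star_transpose_single_line a x z : in_PX a -> a (inl x) (inr z) ->
  let c := star (transpose a) (single_line (fun y => a (inl x) (inl y))) in
  (forall u v, c u v -> (a (inl x) (swap_pt u) <-> a (inl x) (swap_pt v))) /\
  (forall u v, a (inl x) (swap_pt u) -> a (inl x) (swap_pt v) -> c u v).
Proof.
  intros Ha Hxz c.
  assert (Hcl : sim_closed (transpose a) (single_line (fun y => a (inl x) (inl y)))
      (on_pt3 (fun w => a (inl x) (swap_pt w)) (fun y => a (inl x) (inl y)))).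
  { split.
    - intros [u|u] [v|v] H; unfold transpose in H; simpl in *; split; intro; equiv_auto Ha.
    - intros u v [<-|[Hu Hv]]; [tauto|]. destruct u, v; simpl in *; tauto. }
  split; [intros u v; apply (star_closed_iff Hcl)|].
  intros u v Hu Hv. apply (star_of_hub (h := Mid x) _ _ Hcl); [split| |exact Hu|exact Hv].
  - intros [y|y] Hy; simpl in Hy; [exists (inr x)|exists (inl z)];
      (split; [unfold transpose; simpl; equiv_auto Ha|discriminate]).
  - intros [y|y] Hy; simpl in Hy; [exists (inr y)|exists (inl y)];
      (split; [right; auto|discriminate]).
  - intros [y|y] Hy; simpl in Hy.
    + apply (sim_left _ _ (inl y) (inr x)). unfold transpose; simpl. equiv_auto Ha.
    + apply (sim_right _ _ (inr y) (inl x)). right; simpl. split; equiv_auto Ha.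
Qed.

Lemma star_conj_single_line a x z : in_PX a -> a (inl x) (inr z) ->
  star (star (transpose a) (single_line (fun y => a (inl x) (inl y)))) a (inl z) (inr z).
Proof.
  intros Ha Hxz.
  destruct (star_transpose_single_line _ _ Ha Hxz) as [Hc_iff Hc_join].
  set (c := star (transpose a) _) in *.
  assert (Hcl : sim_closed c a
      (on_pt3 (fun w => a (inl x) (inr (base_pt w))) (fun y => a (inl x) (inl y)))).
  { split.
    - intros [u|u] [v|v] H; exact (Hc_iff _ _ H).
    - intros [u|u] [v|v] H; simpl; split; intro; equiv_auto Ha. }
  apply (star_of_hub (h := Mid x) _ _ Hcl); [split| |exact Hxz|exact Hxz].
  - intros [y|y] Hy; simpl in Hy; [exists (inr x)|exists (inl z)];
      (split; [apply Hc_join; simpl; equiv_auto Ha|discriminate]).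
  - intros [y|y] Hy; simpl in Hy; [exists (inr z)|exists (inl x)];
      (split; [equiv_auto Ha|discriminate]).
  - intros [y|y] Hy; simpl in Hy.
    + apply (sim_left c a (inl y) (inr x)), Hc_join; simpl; equiv_auto Ha.
    + apply rst_sym, (sim_right c a (inl x) (inr y)). equiv_auto Ha.
Qed.

Lemma star_conj_single_line_inv b A z : in_PX b ->
  star (star (transpose b) (single_line A)) b (inl z) (inr z) ->
  exists w, b (inl w) (inr z) /\ forall y, b (inl w) (inl y) -> A y.
Proof.
  intros Hb [H|[Hsim Hnp]]; [discriminate|].
  set (c := star (transpose b) (single_line A)) in *.
  assert (Hpoint : forall u, ~ A (base_pt u) -> singleton_block (single_line A) u).
  { now intros u HA v [<-|[Hu _]]. }
  destruct (proj2 Hb (inr z)) as [Hsing|[[w Hw] _]].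
  { destruct Hnp. exists (inr z). right. split; [exact Hsing|apply rst_sym, Hsim]. }
  assert (Hzw : sim c b (Lft z) (Mid w)).
  { apply rst_trans with (Rgt z); [exact Hsim|]. exact (sim_right c b (inr z) (inl w) Hw). }
  assert (Hc_line : exists v, c (inr w) v /\ v <> inr w).
  { apply NNPP. intro Hno. destruct Hnp. exists (inr w). left. split; [|apply rst_sym, Hzw].
    intros v Hv. apply NNPP. intro Hne. apply Hno. now exists v. }
  destruct Hc_line as [v [[Heq|[Hsim' Hnp']] Hne]]; [congruence|].
  (* The inner class of w' avoids the points of e_A, i.e. it stays inside A. *)
  assert (HAw : A w).
  { apply NNPP. intro HA. apply Hnp'. exists (inr w). right.
    split; [exact (Hpoint (inr w) HA)|apply rst_refl]. }
  exists w. split; [equiv_auto Hb|].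
  intros y Hy. apply NNPP. intro HA. apply Hnp'. exists (inl y). right.
  split; [exact (Hpoint (inl y) HA)|].
  apply rst_trans with (Mid w).
  - apply (sim_left _ _ (inr y) (inr w)). unfold transpose; simpl. equiv_auto Hb.
  - apply (sim_right _ _ (inl w) (inr w)). right; simpl. now split.
Qed.

Lemma circ_left_unit d a : in_PX a -> left_unit_for d a -> circ d a = a.
Proof.
  intros Ha [Hcol Hline].
  assert (Hd_col : forall x u, d (inr x) u -> a (inl x) (inl (base_pt u))).
  { intros x u H. destruct (Hcol _ _ H) as [<-|H']; [apply (PX_refl Ha)|exact H']. }
  apply prel_ext; intros u v; split.
  - intros [<-|[b0 [_ [_ [_ [Hu Hv]]]]]]; [apply (PX_refl Ha)|].
    assert (Hblock : forall w, (match w with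
        | inl x => d (inr b0) (inl x) | inr x => a (inl b0) (inr x) end) -> a (inl b0) w).
    { intros [y|y] Hy; [exact (Hd_col _ _ Hy)|exact Hy]. }
    apply Hblock in Hu; apply Hblock in Hv. equiv_auto Ha.
  - intro H. destruct (classic (u = v)) as [<-|Hne]; [now left|right].
    destruct (line_block_of_related Ha H Hne) as [[x0 Hx0] [z0 Hz0]].
    assert (Hd : forall u1 v1, a u (inl (base_pt u1)) -> a u (inl (base_pt v1)) -> d u1 v1).
    { intros u1 v1 Hu1 Hv1. apply (Hline x0 z0); equiv_auto Ha. }
    exists x0. split; [|split; [|split]].
    + split; exists x0; apply Hd; simpl; equiv_auto Ha.
    + split; [exists x0|exists z0]; equiv_auto Ha.
    + intro y. split; [apply Hd_col|intro Hy; apply Hd; simpl; equiv_auto Ha].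
    + split; [destruct u|destruct v]; (apply Hd; simpl; equiv_auto Ha) || equiv_auto Ha.
Qed.

Lemma circ_transpose_left_unit a : in_PX a -> left_unit_for (circ a (transpose a)) a.
Proof.
  intro Ha. split.
  - intros u v [<-|[b0 [_ [_ [_ [Hu Hv]]]]]]; [now left|right].
    assert (Hbase : forall w, (match w with
        | inl x => a (inr b0) (inl x) | inr x => transpose a (inl b0) (inr x) end) ->
        a (inr b0) (inl (base_pt w))).
    { now intros [y|y]. }
    apply Hbase in Hu; apply Hbase in Hv. equiv_auto Ha.
  - intros x z u v Hxz Hu Hv. right. exists z. split; [|split; [|split]].
    + split; [exists x|exists z]; equiv_auto Ha.
    + split; [exists z|exists x]; unfold transpose; simpl; equiv_auto Ha.
    + intro y. reflexivity.
    + split; [destruct u|destruct v]; unfold transpose; simpl in *; equiv_auto Ha.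
Qed.

Lemma circ_conj_single_line a x z : in_PX a -> a (inl x) (inr z) ->
  circ (circ (transpose a) (single_line (fun y => a (inl x) (inl y)))) a (inl z) (inr z).
Proof.
  intros Ha Hxz.
  set (c := circ (transpose a) _).
  assert (Hc : forall u, a (inl x) (swap_pt u) -> c (inr x) u).
  { intros u Hu. right. exists x. split; [|split; [|split]].
    - split; [exists z|exists x]; unfold transpose; simpl; equiv_auto Ha.
    - split; exists x; right; simpl; split; equiv_auto Ha.
    - intro y. unfold transpose, single_line; simpl. split.
      + intro Hy. right. split; equiv_auto Ha.
      + intros [Heq|[_ Hy]]; [injection Heq as <-; equiv_auto Ha|exact Hy].
    - split; [right; simpl; split; equiv_auto Ha|].
      destruct u; [exact Hu|right; simpl; split; equiv_auto Ha]. }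
  right. exists x. split; [|split; [|split]].
  - split; [exists z|exists x]; [exact (Hc (inl z) Hxz)|now left].
  - split; [exists x|exists z]; equiv_auto Ha.
  - intro y. split; [|apply (Hc (inr y))].
    intros [Heq|[b1 [_ [_ [_ [_ [Heq|[_ Hy]]]]]]]]; [|discriminate|exact Hy].
    injection Heq as <-. apply (PX_refl Ha).
  - split; [exact (Hc (inl z) Hxz)|exact Hxz].
Qed.

Lemma circ_conj_single_line_inv b A z : in_PX b ->
  circ (circ (transpose b) (single_line A)) b (inl z) (inr z) ->
  exists w, b (inl w) (inr z) /\ forall y, b (inl w) (inl y) -> A y.
Proof.
  intros Hb [H|[b0 [[[x Hx] _] [_ [Hiff [_ Hz]]]]]]; [discriminate|].
  exists b0. split; [exact Hz|].
  assert (HAb0 : A b0).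
  { destruct Hx as [Heq|[b1 [_ [_ [_ [[Heq|[_ HA]] _]]]]]]; [discriminate..|exact HA]. }
  intros y Hy. apply Hiff in Hy.
  destruct Hy as [Heq|[b1 [_ [_ [_ [_ [Heq|[_ HA]]]]]]]]; [|discriminate|exact HA].
  injection Heq as <-. exact HAb0.
Qed.

Lemma mu_rel_sym (T : Type) (P : T -> Prop) (op : T -> T -> T) (s t : T) :
  mu_rel P op s t -> mu_rel P op t s.
Proof. intros H e He s' t' Hs Ht. symmetry. now apply H. Qed.

Lemma PX_incl_of_lines a b : in_PX a -> in_PX b ->
  (forall x z, a (inl x) (inr z) -> b (inl x) (inr z)) -> forall u v, a u v -> b u v.
Proof.
  intros Ha Hb Hlines u v H.
  destruct (classic (u = v)) as [<-|Hne]; [apply (PX_refl Hb)|].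
  destruct (line_block_of_related Ha H Hne) as [[x0 Hx0] [z0 Hz0]].
  assert (Hxz : a (inl x0) (inr z0)) by equiv_auto Ha.
  assert (Hblock : forall w, a (inl x0) w -> b (inl x0) w).
  { intros [y|y] Hy; [|now apply Hlines].
    assert (b (inl y) (inr z0)) by (apply Hlines; equiv_auto Ha).
    assert (b (inl x0) (inr z0)) by now apply Hlines.
    equiv_auto Hb. }
  assert (b (inl x0) u) by (apply Hblock; equiv_auto Ha).
  assert (b (inl x0) v) by (apply Hblock; equiv_auto Ha).
  equiv_auto Hb.
Qed.

Section Fundamental.

Variable op : prel X -> prel X -> prel X.
Hypothesis op_left_unit : forall d a, in_PX a -> left_unit_for d a -> op d a = a.
Hypothesis op_transpose_left_unit :
  forall a, in_PX a -> left_unit_for (op a (transpose a)) a.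
Hypothesis op_conj_single_line : forall a x z, in_PX a -> a (inl x) (inr z) ->
  op (op (transpose a) (single_line (fun y => a (inl x) (inl y)))) a (inl z) (inr z).
Hypothesis op_conj_single_line_inv : forall b A z, in_PX b ->
  op (op (transpose b) (single_line A)) b (inl z) (inr z) ->
  exists w, b (inl w) (inr z) /\ forall y, b (inl w) (inl y) -> A y.

Lemma transpose_inverse a : in_PX a -> inverse_in (@in_PX X) op a (transpose a).
Proof.
  intro Ha. pose proof (transpose_PX Ha) as Hat.
  split; [exact Hat|split]; apply op_left_unit; auto.
  rewrite <- (transpose_involutive a) at 2. now apply op_transpose_left_unit.
Qed.

Lemma single_line_idempotent A : idempotent_in (@in_PX X) op (single_line A).
Proof.
  split; [apply single_line_PX|].
  apply op_left_unit; [apply single_line_PX|apply single_line_left_unit].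
Qed.

Lemma mu_line_sub a b x z : in_PX a -> in_PX b -> mu_rel (@in_PX X) op a b ->
  a (inl x) (inr z) ->
  exists w, b (inl w) (inr z) /\ forall y, b (inl w) (inl y) -> a (inl x) (inl y).
Proof.
  intros Ha Hb Hmu Hxz.
  apply op_conj_single_line_inv; [exact Hb|].
  rewrite <- (Hmu _ (single_line_idempotent _) _ _ (transpose_inverse Ha)
                (transpose_inverse Hb)).
  now apply op_conj_single_line.
Qed.

Lemma mu_lines a b x z : in_PX a -> in_PX b -> mu_rel (@in_PX X) op a b ->
  a (inl x) (inr z) -> b (inl x) (inr z).
Proof.
  intros Ha Hb Hmu Hxz.
  destruct (mu_line_sub _ _ Ha Hb Hmu Hxz) as [w [Hwz Hw_sub]].
  destruct (mu_line_sub _ _ Hb Ha (mu_rel_sym Hmu) Hwz) as [w' [Hw'z Hw'_sub]].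
  assert (Hb_wx : b (inl w) (inl x)) by (apply Hw'_sub; equiv_auto Ha).
  equiv_auto Hb.
Qed.

Lemma fundamental_PX : fundamental (@in_PX X) op.
Proof.
  intros a b Ha Hb Hmu. apply prel_ext. intros u v. split; apply PX_incl_of_lines; auto.
  - intros x z. now apply mu_lines.
  - intros x z. apply mu_lines; auto. now apply mu_rel_sym.
Qed.

End Fundamental.
End PartitionSemigroups.

Theorem mainTheorem3 (X : Type) (hX : exists x y : X, x <> y) :
  fundamental (@in_PX X) (@star X) /\ fundamental (@in_PX X) (@circ X).
Proof.
  split; apply fundamental_PX.
  - apply star_left_unit.
  - apply star_transpose_left_unit.
  - apply star_conj_single_line.
  - apply star_conj_single_line_inv.
  - apply circ_left_unit.
  - apply circ_transpose_left_unit.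
  - apply circ_conj_single_line.
  - apply circ_conj_single_line_inv.
Qed.
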